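(* Let $(X,\mathcal{A})$ be a measurable space, $f,g\in\mathcal{F}_{[0,1]}^{(X,\mathcal{A})}$ comonotone, $\star:[0,1]^2\to[0,1]$ continuous and non-decreasing in both arguments, and let the semicopula $\circledast$ be a continuous t-norm. Let $\alpha,\beta,\gamma,\lambda,\upsilon,\tau\in(0,\infty)$ satisfy $0<\alpha\lambda\le1$, $1\le\beta\upsilon<\infty$, $1\le\gamma\tau<\infty$, $\lambda\le\tau$, $\lambda\le\upsilon$, $\alpha\le\beta$, $\alpha\le\gamma$, and assume that $(\cdot)^{\alpha}$ is superdistributive over $\circledast$ and that $\circledast^{\lambda}$ dominates $\circledast$. Then for every monotone measure $m$ on $(X,\mathcal{A})$ with $m(X)=1$, \[ \big[\mathbf{I}_\circledast(m,(f\circledast g)^{\alpha})\big]^{\lambda}\ \ge\ \big[\mathbf{I}_\circledast(m,f^{\beta})\big]^{\upsilon}\circledast\big[\mathbf{I}_\circledast(m,g^{\gamma})\big]^{\tau}, \] where $(f\circledast g)(x)=f(x)\circledast g(x)$.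
   Context: A monotone measure on $(X,\mathcal{A})$ is $m:\mathcal{A}\to[0,\infty]$ with $m(\emptyset)=0$, $m(X)>0$, $m(A)\le m(B)$ for $A\subseteq B$. $\mathcal{F}_{[0,1]}^{(X,\mathcal{A})}$ is the set of $\mathcal{A}$-measurable $f:X\to[0,1]$. A semicopula is $\circledast:[0,1]^2\to[0,1]$, non-decreasing in both components, with neutral element $1$ and $a\circledast b\le\min(a,b)$; a t-norm is an associative commutative semicopula. $\mathbf{I}_\circledast(m,f)=\sup\{t\circledast m(\{f\ge t\}) : t\in[0,1]\}$. $(\cdot)^\alpha$ superdistributive over $\circledast$ means $(x\circledast y)^\alpha\ge x^\alpha\circledast y^\alpha$ for all $x,y$. For binary operations $A,B$, $A$ dominates $B$ if $A(B(a,b),B(c,d))\ge B(A(a,c),A(b,d))$ for all $a,b,c,d$; $\circledast^{\lambda}$ denotes the operation $(x,y)\mapsto(x\circledast y)^{\lambda}$. $f,g$ are comonotone if $(f(x)-f(y))(g(x)-g(y))\ge0$ for all $x,y$. *)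

From HB Require Import structures.
From mathcomp Require Import all_boot all_order all_algebra.
From mathcomp Require Import all_classical all_reals all_analysis.
Set Implicit Arguments. Unset Strict Implicit. Unset Printing Implicit Defensive.
Import Order.TTheory GRing.Theory Num.Theory.
Import numFieldNormedType.Exports.
Local Open Scope classical_set_scope.
Local Open Scope ring_scope.

Section Defs.
Context {d : measure_display} {T : measurableType d} {R : realType}.

Definition monotone_measure (m : set T -> \bar R) : Prop :=
  [/\ m set0 = 0%E, (0 < m setT)%E &
      forall A B, measurable A -> measurable B -> A `<=` B -> (m A <= m B)%E].

Definition unit_meas_fun (f : T -> R) : Prop :=
  measurable_fun setT f /\ forall x, 0 <= f x <= 1.

Definition comonotone (f g : T -> R) : Prop :=
  forall x y, 0 <= (f x - f y) * (g x - g y).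

(* Sugeno-like integral I_op(m,f) = sup { op t (m {f >= t}) | t in [0,1] };
   m has values in [0,1] when m(X)=1 and m is monotone, so we use fine. *)
Definition Iint (op : R -> R -> R) (m : set T -> \bar R) (f : T -> R) : R :=
  sup [set op t (fine (m [set x | t <= f x])) | t in [set t : R | 0 <= t <= 1]].
End Defs.

Section Ops.
Context {R : realType}.

Definition in01 (x : R) : bool := (0 <= x <= 1).

Definition semicopula (op : R -> R -> R) : Prop :=
  [/\ (forall a b, in01 a -> in01 b -> in01 (op a b)),
      (forall a a' b, in01 a -> in01 a' -> in01 b -> a <= a' -> op a b <= op a' b),
      (forall a b b', in01 a -> in01 b -> in01 b' -> b <= b' -> op a b <= op a b'),
      (forall a, in01 a -> op a 1 = a /\ op 1 a = a) &
      (forall a b, in01 a -> in01 b -> op a b <= Num.min a b)].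

Definition tnorm (op : R -> R -> R) : Prop :=
  [/\ semicopula op,
      (forall a b c, in01 a -> in01 b -> in01 c -> op a (op b c) = op (op a b) c) &
      (forall a b, in01 a -> in01 b -> op a b = op b a)].

Definition continuous01 (op : R -> R -> R) : Prop :=
  let F : R * R -> R := fun p => op p.1 p.2 in
  {within [set p : R * R | in01 p.1 /\ in01 p.2], continuous F}.

Definition nondecr01 (op : R -> R -> R) : Prop :=
  (forall a b, in01 a -> in01 b -> in01 (op a b)) /\
  (forall a a' b b', in01 a -> in01 a' -> in01 b -> in01 b' ->
     a <= a' -> b <= b' -> op a b <= op a' b').

Definition superdistributive (alpha : R) (op : R -> R -> R) : Prop :=
  forall x y, in01 x -> in01 y -> (op x y) `^ alpha >= op (x `^ alpha) (y `^ alpha).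

Definition dominates (A B : R -> R -> R) : Prop :=
  forall a b c e, in01 a -> in01 b -> in01 c -> in01 e ->
    A (B a b) (B c e) >= B (A a c) (A b e).

Definition powop (op : R -> R -> R) (lambda : R) : R -> R -> R :=
  fun x y => (op x y) `^ lambda.
End Ops.

From HB Require Import structures.
From mathcomp Require Import all_boot all_order all_algebra.
From mathcomp Require Import all_classical all_reals all_analysis.
From mathcomp Require Import measurable_realfun lra.
Import Order.TTheory GRing.Theory Num.Theory.
Import numFieldNormedType.Exports.
Local Open Scope classical_set_scope.
Local Open Scope ring_scope.

(* For levels s, u the level sets {f^β ≥ s} and {g^γ ≥ u} are nested, since
   f and g are comonotone, so the smaller of their measures is the measure of
   their intersection.  By superdistributivity of (.)^α this intersection lies
   in the level set of (f ⊛ g)^α at height w = s^(α/β) ⊛ u^(α/γ), hence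
   m{f^β ≥ s} ⊛ m{g^γ ≥ u} ≤ m{(f ⊛ g)^α ≥ w}.  Lowering the exponents υ, τ to
   λ, raising s, u to s^(α/β), u^(α/γ) and using that ⊛^λ dominates ⊛ bounds
   each pair of terms of the right-hand side by (w ⊛ m{(f ⊛ g)^α ≥ w})^λ, a
   term of the left-hand side.  Continuity of ⊛ lets the suprema over s and u
   pass through. *)

Section PowerOnUnitInterval.
Context {R : realType}.
Implicit Types x y s e l u : R.

Lemma ge0_ler_powRW {e x y} : 0 <= e -> 0 <= x -> x <= y -> x `^ e <= y `^ e.
Proof. by move=> e0 x0 xy; rewrite ge0_ler_powR ?nnegrE// (le_trans x0). Qed.

Lemma in01_powR {x e} : in01 x -> 0 <= e -> in01 (x `^ e).
Proof.
move=> /andP[x0 x1] e0; rewrite /in01 powR_ge0 /=.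
by have := ge0_ler_powRW e0 x0 x1; rewrite powR1.
Qed.

Lemma in01_ger_powR {x l u} : in01 x -> 0 < l -> l <= u -> x `^ u <= x `^ l.
Proof.
move=> /andP[x0 x1] l0 lu; have [->|xn0] := eqVneq x 0.
  by rewrite !powR0 ?gt_eqF ?(lt_le_trans l0).
by apply: ger_powR; rewrite // lt_neqAle eq_sym xn0 x0.
Qed.

Lemma in01_ger1_powR {x e} : in01 x -> 0 <= e -> e <= 1 -> x <= x `^ e.
Proof.
move=> /andP[x0 x1] e0 e1; have [->|xn0] := eqVneq x 0; first exact: powR_ge0.
by apply: ger1_powR; rewrite // lt_neqAle eq_sym xn0 x0.
Qed.

Lemma le_powR_div s y (a b : R) : 0 < b -> 0 <= a -> 0 <= s -> s <= y `^ b ->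
  s `^ (a / b) <= y `^ a.
Proof.
move=> b0 a0 s0 sy.
have -> : y `^ a = (y `^ b) `^ (a / b) by rewrite -powRrM mulrC divfK ?lt0r_neq0.
by apply: ge0_ler_powRW => //; rewrite divr_ge0 // ltW.
Qed.

Lemma sup_powR (S : set R) e : 0 < e -> S !=set0 -> has_ubound S ->
  (forall x, S x -> 0 <= x) -> (sup S) `^ e = sup [set x `^ e | x in S].
Proof.
move=> e0 S0 ubS S_ge0; set Se := [set x `^ e | x in S].
have [x0 Sx0] := S0.
have supS_ge0 : 0 <= sup S := le_trans (S_ge0 _ Sx0) (ub_le_sup ubS Sx0).
have Se0 : Se !=set0 by exists (x0 `^ e), x0.
have ubSe : ubound Se ((sup S) `^ e).
  move=> _ [x Sx <-].
  by apply: ge0_ler_powRW; [exact: ltW|exact: S_ge0|exact: ub_le_sup].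
have Se_le x : S x -> x `^ e <= sup Se.
  by move=> Sx; apply: ub_le_sup; [exists ((sup S) `^ e)|exists x].
apply/le_anti; rewrite ge_sup // andbT.
have : sup S <= (sup Se) `^ e^-1.
  apply: ge_sup => // x Sx.
  rewrite -[x](powRr1 (S_ge0 _ Sx)) -(mulfV (lt0r_neq0 e0)) powRrM.
  by apply: ge0_ler_powRW; rewrite ?invr_ge0 ?powR_ge0 ?(ltW e0) ?Se_le.
move/(ge0_ler_powRW (ltW e0) supS_ge0); rewrite -powRrM mulVf ?lt0r_neq0 //.
by rewrite powRr1 // (le_trans (powR_ge0 x0 e) (Se_le _ Sx0)).
Qed.

End PowerOnUnitInterval.

Section Semicopula.
Context {R : realType} (op : R -> R -> R).
Hypothesis sc : semicopula op.

Lemma op_in01 a b : in01 a -> in01 b -> in01 (op a b).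
Proof. by case: sc => + _ _ _ _; apply. Qed.

Lemma le_op a a' b b' : in01 a -> in01 a' -> in01 b -> in01 b' ->
  a <= a' -> b <= b' -> op a b <= op a' b'.
Proof.
case: sc => _ mono_l mono_r _ _ a01 a'01 b01 b'01 aa' bb'.
exact: le_trans (mono_l _ _ _ a01 a'01 b01 aa') (mono_r _ _ _ a'01 b01 b'01 bb').
Qed.

Lemma op_le_l a b : in01 a -> in01 b -> op a b <= a.
Proof.
case: sc => _ _ _ _ le_min a01 b01.
by rewrite (le_trans (le_min _ _ a01 b01)) ?ge_min ?lexx.
Qed.

Lemma op_le_r a b : in01 a -> in01 b -> op a b <= b.
Proof.
case: sc => _ _ _ _ le_min a01 b01.
by rewrite (le_trans (le_min _ _ a01 b01)) ?ge_min ?lexx ?orbT.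
Qed.

End Semicopula.
Arguments op_in01 {R op} sc {a b}.
Arguments le_op {R op} sc {a a' b b'}.
Arguments op_le_l {R op} sc {a b}.
Arguments op_le_r {R op} sc {a b}.

Section SupOnUnitInterval.
Context {R : realType}.

Lemma in01_sup (S : set R) : S !=set0 -> (forall x, S x -> in01 x) -> in01 (sup S).
Proof.
move=> [x0 Sx0] S01; have ub1 : ubound S 1 by move=> x /S01 /andP[].
rewrite /in01 (ge_sup (ex_intro _ x0 Sx0) ub1) andbT.
case/andP: (S01 _ Sx0) => x0_ge0 _.
by rewrite (le_trans x0_ge0) // ub_le_sup //; exists 1.
Qed.

Lemma continuous01_sup_le (op : R -> R -> R) (S : set R) b c :
  continuous01 op -> in01 b -> S !=set0 -> (forall x, S x -> in01 x) ->
  (forall x, S x -> op x b <= c) -> op (sup S) b <= c.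
Proof.
move=> op_cont b01 S0 S01 opS_le; rewrite leNgt; apply/negP => c_lt.
have supSb01 : in01 (sup S, b).1 /\ in01 (sup S, b).2 by split=> //; exact: in01_sup.
have /cvgr_gt/(_ c c_lt) [[Q1 Q2] /= [Q1sup Q2b] Q_gt] :=
  proj1 (subspace_continuousP _ _) op_cont _ supSb01.
have ubS : has_ubound S by exists 1 => x /S01 /andP[].
have [x [Sx Q1x]] := closure_sup S0 ubS Q1sup.
have := Q_gt (x, b) (conj Q1x (nbhs_singleton Q2b)) (conj (S01 _ Sx) b01).
by rewrite /= ltNge opS_le.
Qed.

End SupOnUnitInterval.

Section LevelIntegral.
Context {d : measure_display} {T : measurableType d} {R : realType}.
Variables (op : R -> R -> R) (m : set T -> \bar R).
Hypotheses (sc : semicopula op) (mm : monotone_measure m) (m1 : m setT = 1%E).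

Lemma measure_fineE {A} : measurable A -> m A = (fine (m A))%:E /\ in01 (fine (m A)).
Proof.
case: mm => m0 _ mono mA.
have : (0 <= m A)%E by rewrite -m0; apply: mono.
have : (m A <= 1)%E by rewrite -m1; apply: mono.
by case: (m A) => //= r; rewrite !lee_fin /in01 => -> ->.
Qed.

Lemma measure_in01 {A} : measurable A -> in01 (fine (m A)).
Proof. by move=> /measure_fineE[]. Qed.

Lemma le_fine_measure A B : measurable A -> measurable B -> A `<=` B ->
  fine (m A) <= fine (m B).
Proof.
move=> mA mB AB; case: mm => _ _ /(_ A B mA mB AB).
by rewrite (measure_fineE mA).1 (measure_fineE mB).1 lee_fin.
Qed.

Lemma op_fine_measure_le A B H : measurable A -> measurable B -> measurable H ->
  A `<=` B \/ B `<=` A -> A `&` B `<=` H ->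
  op (fine (m A)) (fine (m B)) <= fine (m H).
Proof.
move=> mA mB mH [AB|BA] ABH.
- apply: le_trans (op_le_l sc (measure_in01 mA) (measure_in01 mB)) _.
  by apply: le_fine_measure => // x Ax; apply: ABH; split=> //; exact: AB.
- apply: le_trans (op_le_r sc (measure_in01 mA) (measure_in01 mB)) _.
  by apply: le_fine_measure => // x Bx; apply: ABH; split=> //; exact: BA.
Qed.

Variable h : T -> R.
Hypothesis mh : forall t, measurable [set x | t <= h x].

Let values :=
  [set op t (fine (m [set x | t <= h x])) | t in [set t : R | 0 <= t <= 1]].

Let values_neq0 : values !=set0.
Proof.
by exists (op 0 (fine (m [set x | 0 <= h x]))), 0 => //; rewrite /= lexx ler01.
Qed.

Let values01 y : values y -> in01 y.
Proof. by move=> [t t01 <-]; apply: (op_in01 sc t01); exact: measure_in01. Qed.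

Lemma Iint01 : in01 (Iint op m h).
Proof. exact: in01_sup values_neq0 values01. Qed.

Lemma Iint_ub t : in01 t -> op t (fine (m [set x | t <= h x])) <= Iint op m h.
Proof.
by move=> t01; apply: ub_le_sup; [exists 1 => y /values01 /andP[]|exists t].
Qed.

Lemma Iint_powR_opl_le e b c : continuous01 op -> 0 < e -> in01 b ->
  (forall t, in01 t -> op ((op t (fine (m [set x | t <= h x]))) `^ e) b <= c) ->
  op ((Iint op m h) `^ e) b <= c.
Proof.
move=> op_cont e0 b01 le_c; rewrite /Iint sup_powR //; last 2 first.
- by exists 1 => y /values01 /andP[].
- by move=> y /values01 /andP[].
apply: continuous01_sup_le => //.
- by case: values_neq0 => y vy; exists (y `^ e), y.
- by move=> _ [y /values01 y01 <-]; exact: in01_powR (ltW e0).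
- by move=> _ [_ [t t01 <-] <-]; exact: le_c.
Qed.

Lemma Iint_powR_opr_le e b c : continuous01 op -> 0 < e -> in01 b ->
  (forall a b, in01 a -> in01 b -> op a b = op b a) ->
  (forall t, in01 t -> op b ((op t (fine (m [set x | t <= h x]))) `^ e) <= c) ->
  op b ((Iint op m h) `^ e) <= c.
Proof.
move=> op_cont e0 b01 op_comm le_c.
rewrite op_comm //; last exact: in01_powR Iint01 (ltW e0).
apply: Iint_powR_opl_le => // t t01; rewrite -op_comm //; first exact: le_c.
exact: in01_powR (op_in01 sc t01 (measure_in01 (mh t))) (ltW e0).
Qed.

End LevelIntegral.
Arguments measure_in01 {d T R m} mm m1 {A}.
Arguments op_fine_measure_le {d T R op m} sc mm m1 {A B H}.
Arguments Iint01 {d T R op m} sc mm m1 {h} mh.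
Arguments Iint_ub {d T R op m} sc mm m1 {h} mh {t}.
Arguments Iint_powR_opl_le {d T R op m} sc mm m1 {h} mh {e b c}.
Arguments Iint_powR_opr_le {d T R op m} sc mm m1 {h} mh {e b c}.

Definition upclosed {T} {R : realType} (s : T -> R) (P : set T) :=
  forall x y, s x <= s y -> P x -> P y.

Section Upclosed.
Context {d : measure_display} {T : measurableType d} {R : realType}.
Implicit Types (s f g : T -> R) (P Q : set T).

Lemma measurable_upclosed s P : measurable_fun setT s -> upclosed s P -> measurable P.
Proof.
move=> ms upP; set I := [set r : R | exists2 x, P x & s x <= r].
have -> : P = s @^-1` I.
  by apply/seteqP; split=> [x Px|y [x Px sxy]]; [exists x|exact: upP sxy Px].
rewrite -[_ @^-1` _]setTI; apply: ms => //; apply: is_interval_measurable.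
by move=> r r' [x Px sxr] _ z /andP[rz _]; exists x => //; exact: le_trans rz.
Qed.

Lemma upclosed_powR_level s e t : 0 <= e -> (forall x, 0 <= s x) ->
  upclosed s [set x | t <= s x `^ e].
Proof. by move=> e0 s_ge0 x y sxy /= /le_trans; apply; exact: ge0_ler_powRW. Qed.

Lemma comonotone_le_add {f g x y} : comonotone f g ->
  f x + g x <= f y + g y -> f x <= f y /\ g x <= g y.
Proof. by move=> /(_ x y) fg le_add; split; rewrite leNgt; apply/negP => lt; nra. Qed.

Lemma comonotone_upclosed_nested f g P Q : comonotone f g ->
  upclosed f P -> upclosed g Q -> P `<=` Q \/ Q `<=` P.
Proof.
move=> fg upP upQ; have [|/existsNP[x /not_implyP[Px nQx]]] := pselect (P `<=` Q).
  by left.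
right=> y Qy; have gxy : g x < g y.
  by rewrite ltNge; apply/negP => gyx; exact: nQx (upQ _ _ gyx Qy).
by apply: upP Px; have := fg x y; nra.
Qed.

Lemma measurable_powR_level s e t : measurable_fun setT s ->
  (forall x, 0 <= s x) -> 0 <= e -> measurable [set x | t <= s x `^ e].
Proof.
by move=> ms s_ge0 e0; apply: measurable_upclosed ms _; exact: upclosed_powR_level.
Qed.

Lemma measurable_comonotone_op_level f g (op : R -> R -> R) e t : semicopula op ->
  unit_meas_fun f -> unit_meas_fun g -> comonotone f g -> 0 <= e ->
  measurable [set x | t <= (op (f x) (g x)) `^ e].
Proof.
move=> sc [mf f01] [mg g01] fg e0.
apply: (@measurable_upclosed (f \+ g)); first exact: measurable_funD.
move=> x y /(comonotone_le_add fg)[fxy gxy] /= /le_trans; apply.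
apply: ge0_ler_powRW => //; first by case/andP: (op_in01 sc (f01 x) (g01 x)).
exact: (le_op sc (f01 x) (f01 y) (g01 x) (g01 y) fxy gxy).
Qed.

End Upclosed.

Lemma level_powR_subset {d} {T : measurableType d} {R : realType}
    {f g : T -> R} {op : R -> R -> R} {alpha beta gamma s u : R} :
  semicopula op -> superdistributive alpha op ->
  (forall x, in01 (f x)) -> (forall x, in01 (g x)) ->
  0 <= alpha -> 0 < beta -> 0 < gamma -> in01 s -> in01 u ->
  [set x | s <= f x `^ beta] `&` [set x | u <= g x `^ gamma] `<=`
  [set x | op (s `^ (alpha / beta)) (u `^ (alpha / gamma))
           <= (op (f x) (g x)) `^ alpha].
Proof.
move=> sc sd f01 g01 a0 b0 c0 s01 u01 x [/= sf ug].
have [s0 _] := andP s01; have [u0 _] := andP u01.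
apply: le_trans (sd _ _ (f01 x) (g01 x)).
apply: (le_op sc); try exact: le_powR_div;
  by apply: in01_powR; rewrite // divr_ge0 // ltW.
Qed.

Lemma dominates_powop_le {R : realType} {op : R -> R -> R}
    {l up ta s s' u u' a b : R} :
  semicopula op -> dominates (powop op l) op -> 0 < l -> l <= up -> l <= ta ->
  in01 s -> in01 s' -> in01 u -> in01 u' -> in01 a -> in01 b -> s <= s' -> u <= u' ->
  op ((op s a) `^ up) ((op u b) `^ ta) <= (op (op s' u') (op a b)) `^ l.
Proof.
move=> sc dom l0 lup lta s01 s'01 u01 u'01 a01 b01 ss' uu'.
have le_pow x y e : in01 x -> in01 y -> l <= e -> x <= y -> x `^ e <= y `^ l.
  move=> x01 y01 le xy; apply: le_trans (in01_ger_powR x01 l0 le) _.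
  by apply: ge0_ler_powRW (ltW l0) _ xy; case/andP: x01.
have [up0 ta0] : 0 <= up /\ 0 <= ta by split; apply: le_trans (ltW l0) _.
have op01 := op_in01 sc.
apply: le_trans (dom _ _ _ _ s'01 u'01 a01 b01); rewrite /powop.
apply: (le_op sc); try (by apply: in01_powR; rewrite ?op01 // ltW);
  apply: le_pow; rewrite ?op01 //; exact: (le_op sc) (lexx _).
Qed.

Lemma level_terms_le_Iint {d} {T : measurableType d} {R : realType}
    (f g : T -> R) (op : R -> R -> R) (m : set T -> \bar R)
    (alpha beta gamma lambda upsilon tau s u : R) :
  unit_meas_fun f -> unit_meas_fun g -> comonotone f g -> semicopula op ->
  monotone_measure m -> m setT = 1%E ->
  0 < alpha -> 0 < beta -> 0 < gamma -> 0 < lambda ->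
  lambda <= tau -> lambda <= upsilon -> alpha <= beta -> alpha <= gamma ->
  superdistributive alpha op -> dominates (powop op lambda) op -> in01 s -> in01 u ->
  op ((op s (fine (m [set x | s <= f x `^ beta]))) `^ upsilon)
     ((op u (fine (m [set x | u <= g x `^ gamma]))) `^ tau)
  <= (Iint op m (fun x => (op (f x) (g x)) `^ alpha)) `^ lambda.
Proof.
move=> uf ug fg sc mm m1 a0 b0 c0 l0 lta lup ab ag sd dom s01 u01.
have [[mf f01] [mg g01]] := (uf, ug).
have f0 x : 0 <= f x by case/andP: (f01 x).
have g0 x : 0 <= g x by case/andP: (g01 x).
set A := [set x | s <= f x `^ beta]; set B := [set x | u <= g x `^ gamma].
have mA : measurable A by apply: measurable_powR_level => //; exact: ltW.
have mB : measurable B by apply: measurable_powR_level => //; exact: ltW.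
have mH t : measurable [set x | t <= (op (f x) (g x)) `^ alpha].
  by apply: measurable_comonotone_op_level => //; exact: ltW.
set s' := s `^ (alpha / beta); set u' := u `^ (alpha / gamma).
have s'01 : in01 s' by apply: in01_powR; rewrite // divr_ge0 // ltW.
have u'01 : in01 u' by apply: in01_powR; rewrite // divr_ge0 // ltW.
have w01 := op_in01 sc s'01 u'01.
have [a01 b01] := (measure_in01 mm m1 mA, measure_in01 mm m1 mB).
apply: le_trans (dominates_powop_le sc dom l0 lup lta s01 s'01 u01 u'01 a01 b01 _ _) _.
- by apply: in01_ger1_powR; rewrite // ?divr_ge0 ?ler_pdivrMr ?mul1r // ltW.
- by apply: in01_ger1_powR; rewrite // ?divr_ge0 ?ler_pdivrMr ?mul1r // ltW.
apply: ge0_ler_powRW (ltW l0) _ _.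
  by case/andP: (op_in01 sc w01 (op_in01 sc a01 b01)).
apply: le_trans (Iint_ub sc mm m1 mH w01).
apply: (le_op sc) (lexx _) _ => //.
- exact: (op_in01 sc a01 b01).
- exact: (measure_in01 mm m1 (mH _)).
apply: (op_fine_measure_le sc mm m1) => //.
- apply: comonotone_upclosed_nested fg _ _;
    by apply: upclosed_powR_level => //; exact: ltW.
- by apply: (level_powR_subset sc sd f01 g01) => //; exact: ltW.
Qed.

Theorem corollary3p16 (d : measure_display) (T : measurableType d) (R : realType)
  (f g : T -> R) (star op : R -> R -> R)
  (alpha beta gamma lambda upsilon tau : R) :
  unit_meas_fun f -> unit_meas_fun g -> comonotone f g ->
  continuous01 star -> nondecr01 star ->
  tnorm op -> continuous01 op ->
  0 < alpha -> 0 < beta -> 0 < gamma -> 0 < lambda -> 0 < upsilon -> 0 < tau ->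
  alpha * lambda <= 1 -> 1 <= beta * upsilon -> 1 <= gamma * tau ->
  lambda <= tau -> lambda <= upsilon -> alpha <= beta -> alpha <= gamma ->
  superdistributive alpha op -> dominates (powop op lambda) op ->
  forall m : set T -> \bar R, monotone_measure m -> m setT = 1%E ->
    (Iint op m (fun x => (op (f x) (g x)) `^ alpha)) `^ lambda >=
    op ((Iint op m (fun x => f x `^ beta)) `^ upsilon)
       ((Iint op m (fun x => g x `^ gamma)) `^ tau).
Proof.
move=> uf ug fg _ _ [sc _ op_comm] op_cont a0 b0 c0 l0 u0 t0 _ _ _
  lta lup ab ag sd dom m mm m1.
have [[mf f01] [mg g01]] := (uf, ug).
have mlf t : measurable [set x | t <= f x `^ beta].
  by apply: measurable_powR_level => // [x|]; [case/andP: (f01 x)|exact: ltW].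
have mlg t : measurable [set x | t <= g x `^ gamma].
  by apply: measurable_powR_level => // [x|]; [case/andP: (g01 x)|exact: ltW].
apply: (Iint_powR_opr_le sc mm m1 mlg) => // [|u u01].
  exact: (in01_powR (Iint01 sc mm m1 mlf) (ltW u0)).
apply: (Iint_powR_opl_le sc mm m1 mlf) => // [|s s01].
  exact: (in01_powR (op_in01 sc u01 (measure_in01 mm m1 (mlg u))) (ltW t0)).
exact: level_terms_le_Iint.
Qed.
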